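(* Let $f,w\colon\mathbb{R}^d\to[0,\infty)$ be two proper log-concave functions such that the support of $w$ is bounded. Then for every $\xi\in(0,\|f\|_\infty)$ there is a positive position $g$ of $w$ with $g\le f$ and $\|g\|_\infty=\xi$.
   Context: A function $\mathbb{R}^d\to[0,\infty)$ is proper log-concave if it is upper semi-continuous, log-concave, with finite positive integral. The positive positions of $w$ are the functions $x\mapsto\alpha\,w(Ax+a)$ with $A$ a positive definite $d\times d$ matrix, $\alpha>0$, $a\in\mathbb{R}^d$. $g\le f$ means pointwise inequality; $\|\cdot\|_\infty$ is the supremum norm. *)

From HB Require Import structures.
From mathcomp Require Import all_boot all_order all_algebra.
From mathcomp Require Import all_classical all_reals all_analysis.
Set Implicit Arguments. Unset Strict Implicit. Unset Printing Implicit Defensive.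
Import Order.TTheory GRing.Theory Num.Theory.
Import numFieldNormedType.Exports.
Local Open Scope classical_set_scope.
Local Open Scope ring_scope.

(* Lebesgue integral of a nonnegative function on R^d, defined as the
   iterated one-dimensional Lebesgue integral (for nonnegative Borel
   functions this is the integral w.r.t. d-dimensional Lebesgue measure,
   by Tonelli). *)
Fixpoint lebesgue_int (R : realType) (d : nat) : ('cV[R]_d -> R) -> \bar R :=
  match d with
  | 0 => fun f => (f 0)%:E
  | n.+1 => fun f : 'cV[R]_n.+1 -> R =>
      (\int[@lebesgue_measure R]_(t in [set: R])
          lebesgue_int (fun y : 'cV[R]_n =>
            f (col_mx (const_mx (t : R) : 'cV[R]_1) y)))%E
  end.

Definition usc (R : realType) (d : nat) (f : 'cV[R]_d -> R) : Prop :=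
  forall x : 'cV[R]_d, forall e : R, 0 < e ->
    \forall y \near x, f y < f x + e.

(* log-concavity of a nonnegative function: log f concave (log 0 = -oo) *)
Definition log_concave (R : realType) (d : nat) (f : 'cV[R]_d -> R) : Prop :=
  forall (x y : 'cV[R]_d) (l : R), 0 < l < 1 ->
    f x `^ l * f y `^ (1 - l) <= f (l *: x + (1 - l) *: y).

Definition proper_log_concave (R : realType) (d : nat) (f : 'cV[R]_d -> R) : Prop :=
  [/\ forall x, 0 <= f x, usc f, log_concave f &
      (0 < lebesgue_int f /\ lebesgue_int f < +oo)%E].

Definition sup_norm (R : realType) (d : nat) (f : 'cV[R]_d -> R) : \bar R :=
  ereal_sup (range (fun x => (f x)%:E)).

Definition pos_def (R : realType) (d : nat) (A : 'M[R]_d) : Prop :=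
  A^T = A /\ forall x : 'cV[R]_d, x != 0 -> 0 < (x^T *m A *m x) 0 0.

Definition bounded_support (R : realType) (d : nat) (w : 'cV[R]_d -> R) : Prop :=
  exists M : R, forall x, w x != 0 -> `|x| <= M.

Definition positive_position (R : realType) (d : nat) (w g : 'cV[R]_d -> R) : Prop :=
  exists (A : 'M[R]_d) (alpha : R) (a : 'cV[R]_d),
    [/\ pos_def A, 0 < alpha & forall x, g x = alpha * w (A *m x + a)].

(* A nonnegative log-concave function is quasi-concave.  If such an f has positive
   iterated integral then, by induction on the dimension, two distinct slices carry
   balls on which f >= c > 0, and quasi-concavity fills in a full-dimensional ball
   between them.  Interpolating between that ball and a point where f > xi,
   log-concavity gives a ball B(z, r) on which f >= xi.  As w is upper semicontinuous
   with bounded support, S = sup w is finite, and S > 0 because w has positive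
   integral.  Then g(x) = (xi / S) w(k (x - z)) with k large vanishes outside
   B(z, r), so g <= f, and sup g = xi. *)

From HB Require Import structures.
From mathcomp Require Import all_boot all_order all_algebra.
From mathcomp Require Import all_classical all_reals all_analysis.
From mathcomp Require Import ring lra measurable_realfun.
Import Order.TTheory GRing.Theory Num.Theory.
Import numFieldNormedType.Exports.
Set Implicit Arguments. Unset Strict Implicit. Unset Printing Implicit Defensive.
Local Open Scope classical_set_scope.
Local Open Scope ring_scope.

Section mx_norm.
Variable R : realType.

Lemma mx_norm_entry_le m n (x : 'M[R]_(m, n)) i j : `|x i j| <= `|x|.
Proof. by rewrite [leRHS]/Num.Def.normr /= mx_normrE; exact: (le_bigmax _ _ (i, j)). Qed.

Lemma mx_norm_dsubmx_le m1 m2 n (x : 'M[R]_(m1 + m2, n)) : `|dsubmx x| <= `|x|.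
Proof.
rewrite [leLHS]/Num.Def.normr /= mx_normrE; apply: bigmax_le => // -[i j] _.
by rewrite mxE; exact: mx_norm_entry_le.
Qed.

Lemma trmx_continuous m n : continuous (fun x : 'M[R]_(m, n) => x^T).
Proof.
move=> x A /nbhs_ballP[e /= e0 eA]; apply/nbhs_ballP; exists e => //= y [_ xy].
by apply: eA; split => // i j; rewrite !mxE; exact: xy.
Qed.

End mx_norm.

Section pos_def.
Variable R : realType.

Lemma trmx_mulmx_self_gt0 n (x : 'cV[R]_n) : x != 0 -> 0 < (x^T *m x) 0 0.
Proof.
have sqE i : x^T 0 i * x i 0 = x i 0 ^+ 2 by rewrite mxE expr2.
move=> x0; rewrite mxE (eq_bigr _ (fun i _ => sqE i)) lt0r sumr_ge0 ?andbT;
  last by move=> i _; exact: sqr_ge0.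
apply: contra x0 => /eqP /psumr_eq0P sum0; apply/eqP/matrixP => i j.
rewrite ord1 !mxE; apply/eqP; rewrite -sqrf_eq0.
by rewrite sum0 // => k _; rewrite sqr_ge0.
Qed.

Lemma pos_def_scalar_mx n (k : R) : 0 < k -> pos_def (k%:M : 'M[R]_n).
Proof.
move=> k0; split => [|x x0]; first exact: tr_scalar_mx.
by rewrite mul_mx_scalar -scalemxAl mxE mulr_gt0 // trmx_mulmx_self_gt0.
Qed.

End pos_def.

Definition quasi_concave (R : realType) (d : nat) (f : 'cV[R]_d -> R) : Prop :=
  forall (x y : 'cV[R]_d) (l : R), 0 < l < 1 ->
    Num.min (f x) (f y) <= f (l *: x + (1 - l) *: y).

Section log_concave.
Variables (R : realType) (d : nat) (f : 'cV[R]_d -> R).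
Hypotheses (f_ge0 : forall x, 0 <= f x) (f_lc : log_concave f).

Lemma log_concave_ge (x y : 'cV[R]_d) (l a b : R) : 0 < l < 1 ->
  0 <= a <= f x -> 0 <= b <= f y -> a `^ l * b `^ (1 - l) <= f (l *: x + (1 - l) *: y).
Proof.
move=> /[dup] l01 /andP[l0 l1] /andP[a0 ax] /andP[b0 bx].
apply: le_trans (f_lc x y l01); apply: ler_pM; rewrite ?powR_ge0 //.
  by apply: ge0_ler_powR; rewrite ?nnegrE // ltW.
by apply: ge0_ler_powR; rewrite ?nnegrE // subr_ge0 ltW.
Qed.

Lemma log_concave_quasi_concave : quasi_concave f.
Proof.
move=> x y l l01; set c := Num.min (f x) (f y).
have c0 : 0 <= c by rewrite le_min !f_ge0.
have -> : c = c `^ l * c `^ (1 - l).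
  by rewrite -powRD addrC subrK ?powRr1 ?oner_eq0.
by apply: log_concave_ge; rewrite // c0 ge_min lexx ?orbT.
Qed.

End log_concave.

Lemma powR_interpolation (R : realType) (a b xi : R) : 0 < b -> b < xi -> xi < a ->
  exists2 l, 0 < l < 1 & a `^ l * b `^ (1 - l) = xi.
Proof.
move=> b0 bxi xia; have xi0 := lt_trans b0 bxi; have a0 := lt_trans xi0 xia.
have lnbxi : ln b < ln xi by rewrite ltr_ln // posrE.
have lnxia : ln xi < ln a by rewrite ltr_ln // posrE.
exists ((ln xi - ln b) / (ln a - ln b)).
  by apply/andP; split; [apply: divr_gt0 | rewrite ltr_pdivrMr]; lra.
rewrite /powR !gt_eqF // -expRD -[RHS]lnK ?posrE //; congr expR.
by field; rewrite subr_eq0 gt_eqF // (lt_trans lnbxi lnxia).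
Qed.

Definition slice (R : realType) (n : nat) (f : 'cV[R]_n.+1 -> R) (t : R)
    : 'cV[R]_n -> R :=
  fun y => f (col_mx (const_mx t : 'cV[R]_1) y).

Definition ge_on_ball (R : realType) (d : nat) (f : 'cV[R]_d -> R) (c : R) : Prop :=
  exists (z : 'cV[R]_d) (r : R), 0 < r /\ forall y, `|y - z| < r -> c <= f y.

Section ge_on_ball.
Variable R : realType.

Lemma ge_on_ball_le d (f : 'cV[R]_d -> R) (c c' : R) :
  c' <= c -> ge_on_ball f c -> ge_on_ball f c'.
Proof. by move=> c'c [z [r [r0 zr]]]; exists z, r; split=> // y /zr; apply: le_trans. Qed.

Lemma quasi_concave_slice n (f : 'cV[R]_n.+1 -> R) t :
  quasi_concave f -> quasi_concave (slice f t).
Proof.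
move=> qf x y l l01; rewrite /slice; set T : 'cV_1 := const_mx t.
have <- : l *: (col_mx T x : 'cV_(1 + n)) + (1 - l) *: col_mx T y
          = col_mx T (l *: x + (1 - l) *: y).
  by rewrite !scale_col_mx add_col_mx -scalerDl addrC subrK scale1r.
exact: qf.
Qed.

Lemma col_mx_ball n (y : 'cV[R]_(1 + n)) (t : R) (z : 'cV[R]_n) (r : R) :
  `|y - col_mx (const_mx t : 'cV_1) z| < r ->
  exists s y', [/\ y = col_mx (const_mx s : 'cV_1) y', `|s - t| < r & `|y' - z| < r].
Proof.
set p := col_mx _ z => yp; set s := y (lshift n ord0) 0; exists s, (dsubmx y); split.
- rewrite -[LHS](vsubmxK y); congr col_mx.
  by apply/matrixP => i j; rewrite !mxE !ord1.
- apply: le_lt_trans yp; have := mx_norm_entry_le (y - p) (lshift n ord0) 0.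
  by rewrite 2!mxE col_mxEu mxE.
- apply: le_lt_trans yp; have := mx_norm_dsubmx_le (y - p).
  by rewrite linearB /= col_mxKd.
Qed.

Lemma quasi_concave_ge_on_ball_slices n (f : 'cV[R]_n.+1 -> R) t1 t2 c :
  quasi_concave f -> t1 != t2 ->
  ge_on_ball (slice f t1) c -> ge_on_ball (slice f t2) c -> ge_on_ball f c.
Proof.
move=> qf t12 [z1 [r1 [r10 B1]]] [z2 [r2 [r20 B2]]].
set r := Num.min r1 r2; have r0 : 0 < r by rewrite lt_min r10.
set D : R := `|t2 - t1|; have D0 : 0 < D by rewrite normr_gt0 subr_eq0 eq_sym.
set E := `|z1 - z2|; have E0 : 0 <= E := normr_ge0 _.
set rho := Num.min (D / 2) (r * D / (D + E)).
have rho0 : 0 < rho by rewrite lt_min !divr_gt0 ?mulr_gt0 ?ltr_wpDr.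
have rhoD : rho <= D / 2 by rewrite ge_min lexx.
have rhoE : rho * (D + E) <= r * D.
  by rewrite -ler_pdivlMr ?ge_min ?lexx ?orbT //; lra.
set tm := (t1 + t2) / 2; set m := 2^-1 *: (z1 + z2).
exists (col_mx (const_mx tm : 'cV_1) m), rho; split => // y.
move=> /col_mx_ball[s [y' [Ey s_tm y'_m]]].
(* [y] is the [l]-combination of [(t1, z1 + e)] and [(t2, z2 + e)], which lie
   in the two slice balls. *)
set l := (t2 - s) / (t2 - t1).
have t21 : t2 - t1 != 0 by rewrite subr_eq0 eq_sym.
have l_half : `|l - 2^-1| = `|s - tm| / D.
  by rewrite distrC /D -normfV -normrM; congr `|_|; rewrite /l /tm; field.
have l01 : 0 < l < 1.
  have : `|l - 2^-1| < 2^-1 by rewrite l_half ltr_pdivrMr //; lra.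
  by rewrite ltr_norml => /andP[? ?]; apply/andP; split; lra.
set e := y' - (l *: z1 + (1 - l) *: z2).
have e_small : `|e| < r.
  have -> : e = (y' - m) - (l - 2^-1) *: (z1 - z2).
    by apply/matrixP => i j; rewrite !mxE; field.
  apply: le_lt_trans (ler_normB _ _) _; rewrite normrZ l_half.
  rewrite -(ltr_pM2r D0) mulrDl.
  have -> : `|s - tm| / D * `|z1 - z2| * D = `|s - tm| * E by rewrite /E; field; lra.
  have : `|y' - m| * D < rho * D by rewrite ltr_pM2r.
  have : `|s - tm| * E <= rho * E by rewrite ler_wpM2r // ltW.
  lra.
have -> : y = l *: col_mx (const_mx t1 : 'cV_1) (z1 + e)
              + (1 - l) *: col_mx (const_mx t2 : 'cV_1) (z2 + e).
  rewrite Ey; apply/matrixP => i j; rewrite !mxE.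
  by case: splitP => k _; rewrite !mxE /l; field.
apply: le_trans (qf _ _ _ l01); rewrite le_min.
apply/andP; split; [apply: B1 | apply: B2];
  by rewrite addrAC subrr add0r; apply: lt_le_trans e_small _; rewrite ge_min lexx ?orbT.
Qed.

End ge_on_ball.

Lemma lebesgue_int_ge0 (R : realType) (d : nat) (f : 'cV[R]_d -> R) :
  (forall x, 0 <= f x) -> (0 <= lebesgue_int f)%E.
Proof.
elim: d f => [|n IH] f f0 /=; first by rewrite lee_fin.
by apply: integral_ge0 => t _; apply: IH.
Qed.

Lemma integral_gt0_two_points (R : realType) (F : R -> \bar R) :
  (forall t, 0 <= F t)%E ->
  (0 < \int[@lebesgue_measure R]_(t in [set: R]) F t)%E ->
  exists t1 t2, [/\ t1 != t2, (0 < F t1)%E & (0 < F t2)%E].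
Proof.
move=> F0 Fgt0; apply: contrapT => noF2; move: Fgt0; apply/negP; rewrite -leNgt.
have [[t0 Ft0]|noF1] := pselect (exists t, 0 < F t)%E; last first.
  rewrite integral0_eq // => t _; apply/eqP; rewrite eq_le F0 andbT leNgt.
  by apply/negP => Ft; apply: noF1; exists t.
have F_eq0 t : t != t0 -> F t = 0%E.
  move=> tt0; apply/eqP; rewrite eq_le F0 andbT leNgt; apply/negP => Ft.
  by apply: noF2; exists t, t0.
rewrite -(@integral_setD1 _ _ t0).
- by rewrite integral0_eq // => t [_ /eqP]; exact: F_eq0.
- exact: measurableD.
- apply: (eq_measurable_fun (fun=> 0%E)); last exact: measurable_cst.
  by move=> t; rewrite inE => -[_ /eqP /F_eq0].
Qed.

Lemma quasi_concave_ge_on_ball (R : realType) (d : nat) (f : 'cV[R]_d -> R) :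
  (forall x, 0 <= f x) -> quasi_concave f -> (0 < lebesgue_int f)%E ->
  exists2 c, 0 < c & ge_on_ball f c.
Proof.
elim: d f => [|n IH] f f0 qf /=.
  rewrite lte_fin => f0_gt0; exists (f 0) => //; exists 0, 1; split => // y _.
  by rewrite (flatmx0 y).
move/(integral_gt0_two_points (fun t => lebesgue_int_ge0 (fun y => f0 _))).
move=> [t1 [t2 [t12 /IH Bt1 /IH Bt2]]].
have [c1 c10 B1] := Bt1 (fun=> f0 _) (quasi_concave_slice t1 qf).
have [c2 c20 B2] := Bt2 (fun=> f0 _) (quasi_concave_slice t2 qf).
exists (Num.min c1 c2); first by rewrite lt_min c10.
by apply: quasi_concave_ge_on_ball_slices t12 _ _ => //;
  [apply: ge_on_ball_le B1 | apply: ge_on_ball_le B2]; rewrite ge_min lexx ?orbT.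
Qed.

Lemma log_concave_ge_on_ball (R : realType) (d : nat) (f : 'cV[R]_d -> R) x0 (c xi : R) :
  (forall x, 0 <= f x) -> log_concave f -> 0 < c -> c < xi -> xi < f x0 ->
  ge_on_ball f c -> ge_on_ball f xi.
Proof.
move=> f0 flc c0 cxi xif [z [r [r0 zr]]].
have [l /[dup] l01 /andP[l0 l1] <-] := powR_interpolation c0 cxi xif.
set mu := 1 - l; have mu0 : 0 < mu by rewrite subr_gt0.
set p := l *: x0 + mu *: z; exists p, (mu * r); split => [|y yp].
  exact: mulr_gt0.
set u := z + mu^-1 *: (y - p).
have -> : y = l *: x0 + mu *: u.
  by apply/matrixP => i j; rewrite !mxE; field; rewrite gt_eqF.
apply: log_concave_ge; rewrite ?f0 ?lexx ?(ltW c0) //=; apply: zr.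
by rewrite addrAC subrr add0r normrZ gtr0_norm ?invr_gt0 // ltr_pdivrMl.
Qed.

Lemma usc_compact_ubound (R : realType) (T : topologicalType) (f : T -> R) (K : set T) :
  (forall x e, 0 < e -> \forall y \near x, f y < f x + e) -> compact K ->
  exists B, forall x, K x -> f x <= B.
Proof.
move=> fusc /compact_near_coveringP cK.
have [|B [_ KB]] := cK R (pinfty_nbhs R) (fun i x => f x < i).
  move=> x _; exists ([set y | f y < f x + 1], [set i | f x + 1 < i]).
    by split; [exact: fusc | exists (f x + 1); split; [exact: num_real|]].
  by move=> [y i] [/= fy fi]; exact: lt_trans fi.
by exists (B + 1) => x /(KB (B + 1)) fx; apply/ltW/fx; rewrite ltrDl.
Qed.

Lemma usc_bounded_support_ubound (R : realType) (d : nat) (w : 'cV[R]_d -> R) :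
  usc w -> bounded_support w -> exists B, forall x, w x <= B.
Proof.
move=> wusc [M wM].
pose cube := [set v : 'rV[R]_d | forall i, v ord0 i \in `[- M, M]].
have cube_compact : compact cube.
  by apply: (@rV_compact _ _ (fun=> `[- M, M]%classic)) => _; exact: segment_compact.
have trmx_cube_compact : compact ((fun v : 'rV[R]_d => v^T) @` cube).
  apply: continuous_compact cube_compact; apply: continuous_subspaceT.
  exact: trmx_continuous.
have [B wB] := usc_compact_ubound wusc trmx_cube_compact.
exists (Num.max B 0) => x; rewrite le_max.
have [->|/wM xM] := eqVneq (w x) 0; first by rewrite lexx orbT.
apply/orP; left; apply: wB; exists x^T; last exact: trmxK.
move=> i; rewrite mxE in_itv /= -ler_norml.
exact: le_trans (mx_norm_entry_le x i 0) xM.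
Qed.

Section sup_norm.
Variables (R : realType) (d : nat).

Lemma sup_normE (w : 'cV[R]_d -> R) :
  (exists B, forall x, w x <= B) -> sup_norm w = (sup (range w))%:E.
Proof.
move=> [B wB]; rewrite /sup_norm -ereal_sup_EFin; last by exists (w 0), 0.
  by rewrite -image_comp.
by exists B => _ [x _ <-].
Qed.

Lemma sup_norm_scale_comp (w : 'cV[R]_d -> R) (T : 'cV[R]_d -> 'cV[R]_d) (alpha : R) :
  0 < alpha -> (forall p, exists x, T x = p) ->
  sup_norm (fun x => alpha * w (T x)) = (alpha%:E * sup_norm w)%E.
Proof.
move=> alpha0 Tsurj; rewrite /sup_norm -ereal_sup_pZl //; congr ereal_sup.
apply/seteqP; split => [_ [x _ <-]|_ [_ [p _ <-] <-]].
  by exists (w (T x))%:E; [exists (T x) | rewrite EFinM].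
by have [x <-] := Tsurj p; exists x.
Qed.

End sup_norm.

Lemma proper_log_concave_ge_on_ball (R : realType) (d : nat) (f : 'cV[R]_d -> R) xi :
  proper_log_concave f -> 0 < xi -> (xi%:E < sup_norm f)%E -> ge_on_ball f xi.
Proof.
move=> [f0 _ flc [fint _]] xi0 xi_lt_f.
have [c c0 f_ge_c] :=
  quasi_concave_ge_on_ball f0 (log_concave_quasi_concave f0 flc) fint.
have [_ [x0 _ <-]] := ereal_sup_gt xi_lt_f; rewrite lte_fin => xi_lt_fx0.
apply: (@log_concave_ge_on_ball _ _ _ x0 (Num.min c (xi / 2))) => //.
- by rewrite lt_min c0 divr_gt0.
- by rewrite gt_min orbC; apply/orP; left; lra.
- by apply: ge_on_ball_le f_ge_c; rewrite ge_min lexx.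
Qed.

Lemma proper_log_concave_sup_norm (R : realType) (d : nat) (w : 'cV[R]_d -> R) :
  proper_log_concave w -> bounded_support w ->
  exists S, [/\ 0 < S, forall x, w x <= S & sup_norm w = S%:E].
Proof.
move=> [w0 wusc wlc [wint _]] wsupp.
have [c c0 [z [r [r0 w_ge_c]]]] :=
  quasi_concave_ge_on_ball w0 (log_concave_quasi_concave w0 wlc) wint.
have [B wB] := usc_bounded_support_ubound wusc wsupp.
have w_le_sup x : w x <= sup (range w).
  by apply: sup_ubound; [exists B => _ [y _ <-] | exists x].
exists (sup (range w)); split => //; last by rewrite sup_normE //; exists B.
apply: lt_le_trans c0 (le_trans (w_ge_c z _) (w_le_sup z)).
by rewrite subrr normr0.
Qed.

Theorem lemmaA3 (R : realType) (d : nat) (f w : 'cV[R]_d -> R) :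
  proper_log_concave f -> proper_log_concave w -> bounded_support w ->
  forall xi : R, 0 < xi -> (xi%:E < sup_norm f)%E ->
  exists g : 'cV[R]_d -> R,
    [/\ positive_position w g, (forall x, g x <= f x) & sup_norm g = xi%:E].
Proof.
move=> pf pw wsupp xi xi0 xi_lt_f; have f0 : forall x, 0 <= f x by case: pf.
have [z [r [r0 f_ge_xi]]] := proper_log_concave_ge_on_ball pf xi0 xi_lt_f.
have [S [S0 w_le_S supwE]] := proper_log_concave_sup_norm pw wsupp.
case: wsupp => M wM; set k := (`|M| + 1) / r.
have k0 : 0 < k by rewrite divr_gt0 // ltr_wpDl.
exists (fun x => xi / S * w (k%:M *m x - k *: z)); split.
- exists k%:M, (xi / S), (- (k *: z)); split => //; first exact: pos_def_scalar_mx.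
  exact: divr_gt0.
- move=> x; have [->|/wM] := eqVneq (w (k%:M *m x - k *: z)) 0.
    by rewrite mulr0 f0.
  rewrite mul_scalar_mx -scalerBr normrZ gtr0_norm // => kxz.
  apply: le_trans (f_ge_xi x _).
    by rewrite mulrAC ler_pdivrMr // ler_wpM2l ?(ltW xi0).
  rewrite -(ltr_pM2l k0); apply: le_lt_trans kxz _.
  by rewrite /k divfK ?gt_eqF //; have := ler_norm M; lra.
- rewrite sup_norm_scale_comp ?divr_gt0 // => [|p].
    by rewrite supwE -EFinM divfK ?gt_eqF.
  exists (z + k^-1 *: p); rewrite mul_scalar_mx scalerDr scalerA.
  by rewrite mulfV ?gt_eqF // scale1r addrAC subrr add0r.
Qed.
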